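(* Let $\mathbb K$ be an odometer-based system and $\nu$ a shift-invariant Borel probability measure on $\mathbb K$. Then $\nu(S)=1$.
   Context: An odometer-based construction sequence over a finite alphabet $\Sigma$ with coefficients $k_n\ge 2$: $\mathcal W_0=\Sigma$, $\mathcal W_{n+1}\subseteq(\mathcal W_n)^{k_n}$ (concatenations of $k_n$ words of $\mathcal W_n$), each $\mathcal W_n$ uniquely readable (whenever $u,v,w\in\mathcal W_n$ and $uv=pws$ then $p$ or $s$ is empty), and each word of $\mathcal W_n$ occurs in each word of $\mathcal W_{n+1}$. $\mathbb K$ is the set of $x\in\Sigma^{\mathbb Z}$ all of whose finite subwords occur in a word of some $\mathcal W_n$, with the shift $sh(x)(i)=x(i+1)$. $S\subseteq\mathbb K$ is the set of $x$ for which there are sequences $a_m,b_m\to\infty$ of natural numbers such that for every $m$ there is an $n$ with $x\restriction[-a_m,b_m)\in\mathcal W_n$. *)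

From Stdlib Require Import Reals ZArith List.
Import ListNotations.
Open Scope R_scope.

Section Defs.
Variable Sigma : Type.

Definition point := Z -> Sigma.

Definition sh (x : point) : point := fun i => x (i + 1)%Z.

Definition window (x : point) (i : Z) (len : nat) : list Sigma :=
  map (fun t => x (i + Z.of_nat t)%Z) (seq 0 len).

Definition occurs (u w : list Sigma) : Prop :=
  exists p s, w = p ++ u ++ s.

Definition odometer_construction (k : nat -> nat) (W : nat -> list Sigma -> Prop) : Prop :=
  (exists l : list Sigma, forall a, In a l) /\
  (forall n, (2 <= k n)%nat) /\
  (forall w, W 0%nat w <-> exists a, w = [a]) /\
  (forall n w, W (S n) w ->
      exists ws : list (list Sigma),
        length ws = k n /\ Forall (W n) ws /\ w = concat ws) /\
  (forall n u v w p s, W n u -> W n v -> W n w ->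
      u ++ v = p ++ w ++ s -> p = [] \/ s = []) /\                   (* unique readability *)
  (forall n u v, W n u -> W (S n) v -> occurs u v).

Definition Kset (W : nat -> list Sigma -> Prop) (x : point) : Prop :=
  forall (i : Z) (len : nat), exists n w, W n w /\ occurs (window x i len) w.

Definition tends_to_infinity (a : nat -> nat) : Prop :=
  forall N, exists M, forall m, (M <= m)%nat -> (N <= a m)%nat.

Definition Sset (W : nat -> list Sigma -> Prop) (x : point) : Prop :=
  Kset W x /\
  exists a b : nat -> nat,
    tends_to_infinity a /\ tends_to_infinity b /\
    forall m, exists n, W n (window x (- Z.of_nat (a m))%Z (a m + b m)).

Definition cylinder (i : Z) (u : list Sigma) (x : point) : Prop :=
  window x i (length u) = u.

(* Borel sigma-algebra of Sigma^Z (product of discrete finite Sigma):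
   the sigma-algebra generated by the cylinder sets (a countable base). *)
Inductive borel : (point -> Prop) -> Prop :=
| borel_cyl : forall i u, borel (cylinder i u)
| borel_compl : forall A, borel A -> borel (fun x => ~ A x)
| borel_union : forall A : nat -> point -> Prop,
    (forall n, borel (A n)) -> borel (fun x => exists n, A n x).

Definition borel_probability (nu : (point -> Prop) -> R) : Prop :=
  (forall A, borel A -> 0 <= nu A) /\
  nu (fun _ => True) = 1 /\
  (forall A : nat -> point -> Prop,
     (forall n, borel (A n)) ->
     (forall n m x, n <> m -> A n x -> A m x -> False) ->
     infinite_sum (fun n => nu (A n)) (nu (fun x => exists n, A n x))).

Definition shift_invariant (nu : (point -> Prop) -> R) : Prop :=
  forall A, borel A -> nu (fun x => A (sh x)) = nu A.

End Defs.

Arguments sh {Sigma}.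
Arguments window {Sigma}.
Arguments occurs {Sigma}.
Arguments odometer_construction {Sigma}.
Arguments Kset {Sigma}.
Arguments Sset {Sigma}.
Arguments cylinder {Sigma}.
Arguments borel {Sigma}.
Arguments borel_probability {Sigma}.
Arguments shift_invariant {Sigma}.

(* Let h_n = k_0 ... k_{n-1}, the common length of the words of W_n.  Every x in K is
   parsed at each level n: some word of W_n occupies x[-j, -j + h_n) with 0 <= j < h_n, and
   unique readability forces two occurrences of W_n-words in a point of K to be at least h_n
   apart.  So the sets F_j = {x in K | a W_n-word starts at -j}, 0 <= j < h_n, are disjoint,
   and by shift invariance they all have measure nu(F_0) <= 1/h_n.  A point of K outside S
   has, for some N, no word window reaching N to both sides of 0; at every level n its
   covering word then starts at one of 2N positions near the ends of [0, h_n), so these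
   points have measure at most 2N/h_n, which tends to 0. *)

From Stdlib Require Import Reals ZArith List Lia Lra.
From Stdlib Require Import Classical ClassicalEpsilon FunctionalExtensionality PropExtensionality.
Import ListNotations.
Open Scope R_scope.

Lemma pred_ext {T : Type} (A B : T -> Prop) : (forall x, A x <-> B x) -> A = B.
Proof.
  intro H; apply functional_extensionality; intro x; apply propositional_extensionality; auto.
Qed.

Section Concatenations.
Context {A : Type}.
Implicit Types a b c d p s u v : list A.

Lemma app_eq_app_le a b c d :
  a ++ b = c ++ d -> (length a <= length c)%nat -> exists m, c = a ++ m /\ b = m ++ d.
Proof.
  intros E Hle. destruct (app_eq_app _ _ _ _ E) as (m & [[-> ->]|[-> ->]]).
  - rewrite length_app in Hle. destruct m; simpl in *; [|lia].
    exists []. now rewrite !app_nil_r.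
  - eauto.
Qed.

Lemma app_inv_length a b c d : a ++ b = c ++ d -> length a = length c -> a = c /\ b = d.
Proof.
  intros E Hlen. destruct (app_eq_app_le a b c d E) as (m & -> & ->); [lia|].
  rewrite length_app in Hlen. destruct m; simpl in *; [|lia]. now rewrite app_nil_r.
Qed.

Lemma length_concat_const (h : nat) (ws : list (list A)) :
  Forall (fun v => length v = h) ws -> length (concat ws) = (length ws * h)%nat.
Proof. induction 1; simpl; auto. rewrite length_app; lia. Qed.

Lemma concat_block_at (h : nat) (ws : list (list A)) (pos : nat) :
  Forall (fun v => length v = h) ws -> (pos < length (concat ws))%nat ->
  exists ws1 v ws2, ws = ws1 ++ v :: ws2 /\
    (length (concat ws1) <= pos < length (concat ws1) + h)%nat.
Proof.
  intro Hws; revert pos. induction Hws as [|v ws Hv Hws IH]; intros pos Hpos; simpl in *; [lia|].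
  rewrite length_app in Hpos. destruct (Nat.lt_ge_cases pos h).
  - exists [], v, ws. simpl; split; auto; lia.
  - destruct (IH (pos - h)%nat) as (ws1 & v' & ws2 & -> & Hb); [lia|].
    exists (v :: ws1), v', ws2. simpl. rewrite length_app. split; auto; lia.
Qed.

Section UniquelyReadable.
Variable V : list A -> Prop.
Variable h : nat.
Hypothesis V_length : forall v, V v -> length v = h.
Hypothesis V_readable : forall u v w p s, V u -> V v -> V w -> u ++ v = p ++ w ++ s -> p = [] \/ s = [].

Lemma aligned_occurrence (ws : list (list A)) p u s :
  Forall V ws -> concat ws = p ++ u ++ s -> V u -> exists q, length p = (q * h)%nat.
Proof.
  intros Hws; revert p. induction Hws as [|v ws Hv Hws IH]; intros p E Hu; simpl in E.
  - exists O. apply (f_equal (@length A)) in E. rewrite !length_app in E. simpl in *; lia.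
  - pose proof (V_length v Hv) as Lv. pose proof (V_length u Hu) as Lu.
    destruct (Nat.lt_ge_cases (length p) h) as [Hp|Hp].
    + symmetry in E. destruct (app_eq_app_le _ _ _ _ E) as (r & -> & E1); [lia|].
      destruct p as [|p0 p']; [now exists O|]. exfalso.
      rewrite length_app in Lv.
      destruct (app_eq_app_le _ _ _ _ (eq_sym E1)) as (m & -> & E2); [lia|].
      rewrite length_app in Lu.
      (* the occurrence [u] straddles [v] and the next block [v'] *)
      destruct Hws as [|v' ws' Hv' _]; simpl in E2.
      * destruct m; simpl in *; [lia|discriminate].
      * pose proof (V_length v' Hv') as Lv'.
        destruct (app_eq_app_le _ _ _ _ (eq_sym E2)) as (t & -> & _); [simpl in *; lia|].
        rewrite length_app in Lv'.
        destruct (V_readable _ _ _ (p0 :: p') t Hv Hv' Hu) as [Hnil | ->].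
        -- now rewrite <- !app_assoc.
        -- discriminate.
        -- simpl in *; lia.
    + destruct (app_eq_app_le _ _ _ _ E) as (p' & -> & E1); [lia|].
      destruct (IH p' E1 Hu) as [q Hq].
      exists (S q). rewrite length_app; simpl; lia.
Qed.

End UniquelyReadable.
End Concatenations.

Section Windows.
Context {Sigma : Type}.
Implicit Types x : Z -> Sigma.

Lemma length_window x i L : length (window x i L) = L.
Proof. unfold window; now rewrite length_map, length_seq. Qed.

Lemma window_succ x i L : window x i (S L) = x i :: window x (i + 1) L.
Proof.
  unfold window; simpl. rewrite Z.add_0_r. f_equal.
  rewrite <- seq_shift, map_map. apply map_ext; intro t. f_equal; lia.
Qed.

Lemma window_add x i a b :
  window x i (a + b) = window x i a ++ window x (i + Z.of_nat a) b.
Proof.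
  revert i. induction a as [|a IH]; intro i.
  - simpl. now rewrite Z.add_0_r.
  - rewrite Nat.add_succ_l, !window_succ, IH, <- app_comm_cons.
    do 3 f_equal; lia.
Qed.

Lemma window_split3 x i L d m : (d + m <= L)%nat ->
  window x i L = window x i d ++ window x (i + Z.of_nat d) m
                 ++ window x (i + Z.of_nat d + Z.of_nat m) (L - d - m).
Proof.
  intro Hle. rewrite <- !window_add. f_equal; lia.
Qed.

Lemma subword_of_window x i L (p s a v b : list Sigma) :
  p ++ window x i L ++ s = a ++ v ++ b ->
  (length p <= length a)%nat -> (length a + length v <= length p + L)%nat ->
  v = window x (i + Z.of_nat (length a - length p)) (length v).
Proof.
  intros E Ha Hv. set (d := (length a - length p)%nat).
  rewrite (window_split3 x i L d (length v)) in E by lia.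
  rewrite <- !app_assoc, app_assoc in E.
  apply app_inv_length in E as [_ E]; [|rewrite length_app, length_window; lia].
  apply app_inv_length in E as [E _]; [|now rewrite length_window].
  now rewrite E.
Qed.

Lemma window_sh x i L : window (sh x) i L = window x (i + 1) L.
Proof. unfold window, sh. apply map_ext; intro; f_equal; lia. Qed.

End Windows.

Section Borel.
Context {Sigma : Type}.
Implicit Types A B : (Z -> Sigma) -> Prop.

Lemma borel_ext A B : (forall x, A x <-> B x) -> borel A -> borel B.
Proof. intro H; now rewrite (pred_ext A B H). Qed.

Lemma borel_True : borel (fun _ : Z -> Sigma => True).
Proof.
  apply borel_ext with (cylinder 0%Z []); [|constructor].
  intro x; unfold cylinder; simpl; tauto.
Qed.

Lemma borel_False : borel (fun _ : Z -> Sigma => False).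
Proof.
  apply borel_ext with (fun _ => ~ True); [tauto|].
  constructor; apply borel_True.
Qed.

Lemma borel_or A B : borel A -> borel B -> borel (fun x => A x \/ B x).
Proof.
  intros HA HB.
  apply borel_ext with (fun x => exists n, match n with O => A x | S _ => B x end).
  - intro x; split.
    + intros [[|n] H]; auto.
    + intros [H|H]; [exists O|exists 1%nat]; auto.
  - constructor; intros [|n]; auto.
Qed.

Lemma borel_and A B : borel A -> borel B -> borel (fun x => A x /\ B x).
Proof.
  intros HA HB. apply borel_ext with (fun x => ~ (~ A x \/ ~ B x)).
  { intro x; split; [|tauto]. intro H; split; apply NNPP; tauto. }
  constructor; apply borel_or; constructor; auto.
Qed.

Lemma borel_const_and (P : Prop) A : borel A -> borel (fun x => P /\ A x).
Proof.
  intro HA. destruct (classic P) as [HP|HP].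
  - apply borel_ext with A; tauto.
  - apply borel_ext with (fun _ => False); [tauto|apply borel_False].
Qed.

Lemma borel_forall (A : nat -> (Z -> Sigma) -> Prop) :
  (forall n, borel (A n)) -> borel (fun x => forall n, A n x).
Proof.
  intro H. apply borel_ext with (fun x => ~ exists n, ~ A n x).
  - intro x; split.
    + intros H1 n; apply NNPP; intro; apply H1; eauto.
    + intros H1 [n Hn]; auto.
  - do 2 constructor; intro n; constructor; auto.
Qed.

Lemma borel_forallZ (A : Z -> (Z -> Sigma) -> Prop) :
  (forall i, borel (A i)) -> borel (fun x => forall i, A i x).
Proof.
  intro H. apply borel_ext with (fun x => forall n : nat, A (Z.of_nat n) x /\ A (- Z.of_nat n)%Z x).
  - intro x; split; [|auto]. intros H1 i.
    destruct (Z_le_gt_dec 0 i).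
    + replace i with (Z.of_nat (Z.to_nat i)) by lia. apply H1.
    + replace i with (- Z.of_nat (Z.to_nat (- i)))%Z by lia. apply H1.
  - apply borel_forall; intro; apply borel_and; auto.
Qed.

Fixpoint words (alphabet : list Sigma) (L : nat) : list (list Sigma) :=
  match L with
  | O => [[]]
  | S L => flat_map (fun a => map (cons a) (words alphabet L)) alphabet
  end.

Lemma in_words (alphabet : list Sigma) (u : list Sigma) :
  (forall a, In a alphabet) -> In u (words alphabet (length u)).
Proof.
  intro Hl. induction u as [|a u IH]; simpl; auto.
  apply in_flat_map. exists a; split; auto. now apply in_map.
Qed.

(* Over a finite alphabet, a window takes finitely many values, each a cylinder. *)
Lemma borel_window (i : Z) (L : nat) (P : list Sigma -> Prop) :
  (exists alphabet : list Sigma, forall a, In a alphabet) ->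
  borel (fun x : Z -> Sigma => P (window x i L)).
Proof.
  intros [alphabet Hl]. set (us := words alphabet L).
  apply borel_ext with
    (fun x => exists t, (P (nth t us []) /\ length (nth t us []) = L) /\ cylinder i (nth t us []) x).
  - intro x; split.
    + intros (t & (HP & HL) & Hx). unfold cylinder in Hx. rewrite HL in Hx. now rewrite Hx.
    + intro HP. assert (Hin : In (window x i L) us).
      { unfold us. rewrite <- (length_window x i L) at 2. now apply in_words. }
      destruct (In_nth _ _ [] Hin) as (t & _ & Ht). exists t. rewrite Ht.
      unfold cylinder. rewrite !length_window. auto.
  - constructor; intro t; apply borel_const_and; constructor.
Qed.

End Borel.

Fixpoint sum_below (f : nat -> R) (M : nat) : R :=
  match M with O => 0 | S M => sum_below f M + f M end.

Lemma sum_f_R0_sum_below f n : sum_f_R0 f n = sum_below f (S n).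
Proof. induction n as [|n IH]; simpl in *; [lra|]. rewrite IH; simpl; lra. Qed.

Lemma sum_below_ext f g M : (forall t, (t < M)%nat -> f t = g t) -> sum_below f M = sum_below g M.
Proof. induction M as [|M IH]; simpl; intro H; auto. rewrite IH, H; auto. Qed.

Lemma sum_below_const c M : sum_below (fun _ => c) M = INR M * c.
Proof. induction M as [|M IH]; simpl sum_below; [simpl; lra|]. rewrite IH, S_INR; lra. Qed.

Lemma infinite_sum_eventually_zero f M :
  (forall t, (M <= t)%nat -> f t = 0) -> infinite_sum f (sum_below f M).
Proof.
  intros Hf eps Heps. exists M; intros n Hn.
  replace (sum_f_R0 f n) with (sum_below f M).
  - unfold Rdist. rewrite Rminus_diag, Rabs_R0; lra.
  - rewrite sum_f_R0_sum_below. induction Hn as [|n Hn IH].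
    + simpl. rewrite Hf by lia. lra.
    + rewrite IH. change (sum_below f (S n) = sum_below f (S n) + f (S n)).
      rewrite Hf by lia. lra.
Qed.

Lemma nonneg_eq0_of_mult_INR_bounded (e C : R) (M : nat) :
  0 <= e -> (forall n, (M <= n)%nat -> e * INR n <= C) -> e = 0.
Proof.
  intros He Hbound. destruct (Req_dec e 0) as [|Hne]; auto. exfalso.
  destruct (INR_archimed e C) as [n0 Hn0]; [lra|].
  specialize (Hbound (max n0 M) (Nat.le_max_r _ _)).
  assert (INR n0 <= INR (max n0 M)) by (apply le_INR; lia).
  nra.
Qed.

Section Measure.
Context {Sigma : Type}.
Variable nu : ((Z -> Sigma) -> Prop) -> R.
Hypothesis Hnu : borel_probability nu.
Implicit Types A B : (Z -> Sigma) -> Prop.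

Lemma measure_ext A B : (forall x, A x <-> B x) -> nu A = nu B.
Proof. intro H; now rewrite (pred_ext A B H). Qed.

Lemma measure_nonneg A : borel A -> 0 <= nu A.
Proof. apply Hnu. Qed.

Lemma measure_empty : nu (fun _ => False) = 0.
Proof.
  set (c := nu (fun _ => False)).
  assert (Hs : infinite_sum (fun _ => c) c).
  { destruct Hnu as (_ & _ & Hadd). unfold c at 2.
    rewrite (measure_ext (fun _ => False) (fun x => exists _ : nat, False)) by firstorder.
    exact (Hadd _ (fun _ => borel_False) (fun _ _ _ _ Hf _ => Hf)). }
  destruct (Req_dec c 0) as [|Hc]; auto. exfalso.
  (* the partial sums [(n+1) c] of the constant series cannot converge to [c] *)
  destruct (Hs (Rabs c) (Rabs_pos_lt _ Hc)) as [N HN].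
  specialize (HN (S N) (Nat.le_succ_diag_r N)).
  unfold Rdist in HN. rewrite sum_f_R0_sum_below, sum_below_const in HN.
  replace (INR (S (S N)) * c - c) with (INR (S N) * c) in HN by (rewrite (S_INR (S N)); lra).
  rewrite Rabs_mult, Rabs_pos_eq in HN by apply pos_INR.
  assert (1 <= INR (S N)) by (apply (le_INR 1); lia).
  pose proof (Rabs_pos c). nra.
Qed.

Lemma measure_finite_union (G : nat -> (Z -> Sigma) -> Prop) (M : nat) :
  (forall t, borel (G t)) ->
  (forall t t' x, (t < M)%nat -> (t' < M)%nat -> t <> t' -> G t x -> G t' x -> False) ->
  nu (fun x => exists t, (t < M)%nat /\ G t x) = sum_below (fun t => nu (G t)) M.
Proof.
  intros HG Hdisj. destruct Hnu as (_ & _ & Hadd).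
  assert (Hs := Hadd (fun t x => (t < M)%nat /\ G t x)
                     (fun t => borel_const_and _ _ (HG t))
                     ltac:(intros n m x Hnm [? ?] [? ?]; eauto)).
  eapply uniqueness_sum; [exact Hs|]. cbv beta.
  rewrite (sum_below_ext _ (fun t => nu (fun x => (t < M)%nat /\ G t x))).
  - apply infinite_sum_eventually_zero. intros t Ht.
    rewrite <- measure_empty. apply measure_ext; intro; lia.
  - intros t Ht. apply measure_ext; tauto.
Qed.

Lemma measure_union2 A B : borel A -> borel B -> (forall x, A x -> B x -> False) ->
  nu (fun x => A x \/ B x) = nu A + nu B.
Proof.
  intros HA HB Hdisj.
  set (G := fun t x => (t = O /\ A x) \/ (t = 1%nat /\ B x)).
  assert (E := measure_finite_union G 2
                 ltac:(intro; apply borel_or; apply borel_const_and; auto)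
                 ltac:(unfold G; intros t t' x _ _ ? [[-> ?]|[-> ?]] [[-> ?]|[-> ?]]; eauto)).
  simpl in E. rewrite Rplus_0_l in E.
  rewrite (measure_ext (G O) A), (measure_ext (G 1%nat) B) in E by (unfold G; intuition lia).
  rewrite <- E. apply measure_ext; intro x; unfold G; split.
  - intros [H|H]; [exists O|exists 1%nat]; auto.
  - intros (t & _ & [[_ H]|[_ H]]); auto.
Qed.

Lemma measure_mono A B : borel A -> borel B -> (forall x, A x -> B x) -> nu A <= nu B.
Proof.
  intros HA HB Hsub.
  rewrite (measure_ext B (fun x => A x \/ (B x /\ ~ A x))) by (intro x; destruct (classic (A x)); intuition).
  rewrite measure_union2; [|auto|apply borel_and; [|constructor]; auto|tauto].
  rewrite <- (Rplus_0_r (nu A)) at 1. apply Rplus_le_compat_l, measure_nonneg.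
  apply borel_and; [|constructor]; auto.
Qed.

Lemma measure_le_1 A : borel A -> nu A <= 1.
Proof.
  intro HA. destruct Hnu as (_ & Htot & _). rewrite <- Htot.
  apply measure_mono; auto using borel_True.
Qed.

Lemma measure_countable_union_null (A : nat -> (Z -> Sigma) -> Prop) :
  (forall n, borel (A n)) -> (forall n, nu (A n) = 0) -> nu (fun x => exists n, A n x) = 0.
Proof.
  intros HA Hnull. destruct Hnu as (_ & _ & Hadd).
  set (D := fun n x => A n x /\ forall m, ~ ((m < n)%nat /\ A m x)).
  assert (HD : forall n, borel (D n)).
  { intro n. apply borel_and; auto. apply borel_forall; intro m.
    constructor; apply borel_const_and; auto. }
  assert (Hs := Hadd D HD).
  rewrite (measure_ext _ (fun x => exists n, D n x)).
  - eapply uniqueness_sum.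
    + apply Hs. intros n m x Hnm [Hn Hn'] [Hm Hm'].
      destruct (Nat.lt_gt_cases n m) as [[Hlt|Hlt] _]; auto; [eapply Hm'|eapply Hn']; eauto.
    + replace 0 with (sum_below (fun n => nu (D n)) 0) by reflexivity.
      apply infinite_sum_eventually_zero. intros t _.
      apply Rle_antisym; [|now apply measure_nonneg].
      rewrite <- (Hnull t). apply measure_mono; auto. now intros x [? ?].
  - intro x; split; [|intros (n & ? & _); eauto].
    intros [n Hn]. induction n as [n IH] using lt_wf_ind.
    destruct (classic (exists m, (m < n)%nat /\ A m x)) as [(m & Hm & HAm)|Hmin].
    + now apply (IH m).
    + exists n. split; auto. intros m Hm. apply Hmin; eauto.
Qed.

Lemma measure_disjoint_union_const (G : nat -> (Z -> Sigma) -> Prop) (M : nat) (c : R) :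
  (forall t, borel (G t)) ->
  (forall t t' x, (t < M)%nat -> (t' < M)%nat -> t <> t' -> G t x -> G t' x -> False) ->
  (forall t, (t < M)%nat -> nu (G t) = c) ->
  INR M * c = nu (fun x => exists t, (t < M)%nat /\ G t x).
Proof.
  intros HG Hdisj Hc.
  rewrite measure_finite_union, <- sum_below_const by auto.
  apply sum_below_ext. intros; symmetry; auto.
Qed.

End Measure.

Fixpoint word_length (k : nat -> nat) (n : nat) : nat :=
  match n with O => 1%nat | S n => (k n * word_length k n)%nat end.

Section Odometer.
Context {Sigma : Type}.
Variable k : nat -> nat.
Variable W : nat -> list Sigma -> Prop.
Hypothesis HW : odometer_construction k W.

Lemma Kset_sh (x : Z -> Sigma) : Kset W (sh x) <-> Kset W x.
Proof.
  unfold Kset. split; intros H i len.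
  - replace i with (i - 1 + 1)%Z by lia. rewrite <- window_sh. apply H.
  - rewrite window_sh. apply H.
Qed.

Definition wide_word_at (N : nat) (x : Z -> Sigma) : Prop :=
  exists a b, (N <= a)%nat /\ (N <= b)%nat /\ exists n, W n (window x (- Z.of_nat a) (a + b)).

Lemma Sset_iff (x : Z -> Sigma) :
  Sset W x <-> Kset W x /\ forall N, wide_word_at N x.
Proof.
  split.
  - intros [HK (a & b & Ha & Hb & H)]. split; auto. intro N.
    destruct (Ha N) as [Ma HMa], (Hb N) as [Mb HMb].
    exists (a (max Ma Mb)), (b (max Ma Mb)).
    split; [apply HMa; lia|split; [apply HMb; lia|apply H]].
  - intros [HK Hwide]. split; auto.
    destruct (choice _ Hwide) as [a Ha].
    destruct (choice _ Ha) as [b Hb].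
    exists a, b. split; [|split].
    + intro N; exists N; intros m Hm. destruct (Hb m) as (? & _ & _); lia.
    + intro N; exists N; intros m Hm. destruct (Hb m) as (_ & ? & _); lia.
    + intro m. apply Hb.
Qed.

Lemma W_length n w : W n w -> length w = word_length k n.
Proof.
  destruct HW as (_ & _ & HW0 & Hsucc & _).
  revert w; induction n as [|n IH]; intros w Hw; simpl.
  - now apply HW0 in Hw as [a ->].
  - destruct (Hsucc n w Hw) as (ws & <- & Hws & ->).
    apply length_concat_const. eapply Forall_impl; [|exact Hws]; auto.
Qed.

Lemma word_length_gt n : (n < word_length k n)%nat.
Proof. destruct HW as (_ & Hk & _). induction n; simpl; auto. specialize (Hk n); nia. Qed.

Lemma word_length_mono m n : (m <= n)%nat -> (word_length k m <= word_length k n)%nat.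
Proof. destruct HW as (_ & Hk & _). induction 1; auto. simpl. specialize (Hk m0); nia. Qed.

Lemma W_concat_lower n m w : (n <= m)%nat -> W m w ->
  exists ws, Forall (W n) ws /\ w = concat ws.
Proof.
  destruct HW as (_ & _ & _ & Hsucc & _). intro Hnm; revert w.
  induction Hnm as [|m _ IH]; intros w Hw.
  - exists [w]. split; [now repeat constructor|simpl; now rewrite app_nil_r].
  - destruct (Hsucc m w Hw) as (vs & _ & Hvs & ->). clear Hw.
    induction Hvs as [|v vs Hv _ IHvs].
    + now exists [].
    + destruct (IH v Hv) as (ws1 & Hws1 & ->). destruct IHvs as (ws2 & Hws2 & E2).
      exists (ws1 ++ ws2). split; [now apply Forall_app|]. simpl; now rewrite concat_app, E2.
Qed.

Lemma K_window_in_concat x n i L : Kset W x -> (word_length k n < L)%nat ->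
  exists ws p s, Forall (W n) ws /\ concat ws = p ++ window x i L ++ s.
Proof.
  intros HK HL. destruct (HK i L) as (m & w & Hw & p & s & E).
  destruct (Nat.le_gt_cases m n) as [Hmn|Hmn].
  - (* a level-[m] word is too short to contain the window *)
    exfalso. apply (f_equal (@length _)) in E.
    rewrite !length_app, length_window, (W_length m w Hw) in E.
    pose proof (word_length_mono m n Hmn). lia.
  - destruct (W_concat_lower n m w) as (ws & Hws & ->); [lia|auto|].
    now exists ws, p, s.
Qed.

Lemma K_covering_word x n : Kset W x ->
  exists j, (j < word_length k n)%nat /\ W n (window x (- Z.of_nat j) (word_length k n)).
Proof.
  intro HK. set (h := word_length k n). pose proof (word_length_gt n) as Hh. fold h in Hh.
  destruct (K_window_in_concat x n (- Z.of_nat h) (2 * h) HK) as (ws & p & s & Hws & E); [lia|].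
  assert (Hlen : Forall (fun v => length v = h) ws).
  { eapply Forall_impl; [|exact Hws]. apply W_length. }
  (* the level-[n] block of the parsing that covers coordinate [0] *)
  destruct (concat_block_at h ws (length p + h) Hlen) as (ws1 & v & ws2 & -> & Hb).
  { rewrite E, !length_app, length_window; lia. }
  apply Forall_app in Hws as [_ Hws]. inversion Hws as [|? ? Hv _]; subst.
  pose proof (W_length n v Hv) as Lv. fold h in Lv.
  pose proof (subword_of_window x (- Z.of_nat h) (2 * h) p s (concat ws1) v (concat ws2)) as Hsub.
  rewrite <- concat_cons, <- concat_app, Lv in Hsub.
  specialize (Hsub (eq_sym E) ltac:(lia) ltac:(lia)).
  exists (h - (length (concat ws1) - length p))%nat. split; [lia|].
  replace (- Z.of_nat _)%Z with (- Z.of_nat h + Z.of_nat (length (concat ws1) - length p))%Z by lia.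
  now rewrite <- Hsub.
Qed.

Lemma K_words_far_apart x n i i' : Kset W x ->
  (i < i' < i + Z.of_nat (word_length k n))%Z ->
  W n (window x i (word_length k n)) -> W n (window x i' (word_length k n)) -> False.
Proof.
  intros HK Hi H1 H2. set (h := word_length k n) in *.
  pose proof (word_length_gt n) as Hh. fold h in Hh.
  destruct HW as (_ & _ & _ & _ & Hread & _).
  destruct (K_window_in_concat x n i (2 * h) HK) as (ws & p & s & Hws & E); [lia|].
  set (d := Z.to_nat (i' - i)).
  (* both occurrences are aligned with the level-[n] blocks, but [0 < d < h] *)
  destruct (aligned_occurrence (W n) h (W_length n) (Hread n) ws p (window x i h)
              (window x (i + Z.of_nat h) h ++ s)) as [q Hq]; auto.
  { rewrite E, app_assoc with (l := window x i h), <- window_add. do 3 f_equal; lia. }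
  destruct (aligned_occurrence (W n) h (W_length n) (Hread n) ws (p ++ window x i d)
              (window x i' h) (window x (i + Z.of_nat d + Z.of_nat h) (2 * h - d - h) ++ s))
    as [q' Hq']; auto.
  { rewrite E, (window_split3 x i (2 * h) d h) by lia.
    replace (i + Z.of_nat d)%Z with i' by lia. now rewrite <- !app_assoc. }
  rewrite length_app, length_window in Hq'.
  destruct (Nat.le_gt_cases q' q); nia.
Qed.

Definition level_word_at (n j : nat) (x : Z -> Sigma) : Prop :=
  Kset W x /\ W n (window x (- Z.of_nat j) (word_length k n)).

Definition no_wide_word_at (N : nat) (x : Z -> Sigma) : Prop :=
  Kset W x /\ ~ wide_word_at N x.

Lemma borel_Kset : borel (Kset W).
Proof.
  destruct HW as (Hfin & _).
  apply borel_forallZ; intro i. apply borel_forall; intro len.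
  now apply (borel_window i len (fun u => exists n w, W n w /\ occurs u w)).
Qed.

Lemma borel_wide_word_at N : borel (wide_word_at N).
Proof.
  destruct HW as (Hfin & _).
  do 2 (constructor; intro). apply borel_const_and, borel_const_and.
  now apply (borel_window _ _ (fun u => exists n, W n u)).
Qed.

Lemma borel_Sset : borel (Sset W).
Proof.
  apply borel_ext with (fun x => Kset W x /\ forall N, wide_word_at N x).
  - intro x; now rewrite Sset_iff.
  - apply borel_and; [apply borel_Kset|apply borel_forall, borel_wide_word_at].
Qed.

Lemma borel_no_wide_word_at N : borel (no_wide_word_at N).
Proof. apply borel_and; [apply borel_Kset|constructor; apply borel_wide_word_at]. Qed.

Lemma borel_level_word_at n j : borel (level_word_at n j).
Proof.
  destruct HW as (Hfin & _).
  apply borel_and; [apply borel_Kset|now apply (borel_window _ _ (W n))].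
Qed.

Lemma level_word_at_disjoint n j j' x :
  (j < word_length k n)%nat -> (j' < word_length k n)%nat -> j <> j' ->
  level_word_at n j x -> level_word_at n j' x -> False.
Proof.
  intros Hj Hj' Hne [HK H] [_ H'].
  destruct (Nat.lt_gt_cases j j') as [[Hlt|Hlt] _]; auto.
  - apply (K_words_far_apart x n (- Z.of_nat j') (- Z.of_nat j)); auto; lia.
  - apply (K_words_far_apart x n (- Z.of_nat j) (- Z.of_nat j')); auto; lia.
Qed.

Lemma no_wide_word_at_covered N n x : (2 * N <= word_length k n)%nat ->
  no_wide_word_at N x ->
  exists j, ((j < N)%nat \/ (word_length k n - N <= j < word_length k n)%nat) /\ level_word_at n j x.
Proof.
  intros HN [HK Hnarrow]. set (h := word_length k n) in *.
  destruct (K_covering_word x n HK) as (j & Hj & Hw). fold h in Hj, Hw.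
  exists j. split; [|split; auto].
  destruct (Nat.lt_ge_cases j N) as [|HjN]; [now left|right].
  destruct (Nat.lt_ge_cases (h - j) N); [lia|]. exfalso.
  apply Hnarrow. exists j, (h - j)%nat. do 2 (split; auto).
  exists n. now replace (j + (h - j))%nat with h by lia.
Qed.

Section ShiftInvariantMeasure.
Variable nu : ((Z -> Sigma) -> Prop) -> R.
Hypothesis Hnu : borel_probability nu.
Hypothesis Hinv : shift_invariant nu.

Lemma measure_level_word_at n j : nu (level_word_at n j) = nu (level_word_at n 0).
Proof.
  induction j as [|j IH]; auto. rewrite <- IH, <- (Hinv _ (borel_level_word_at n (S j))).
  apply measure_ext; intro x. unfold level_word_at.
  rewrite Kset_sh, window_sh. replace (- Z.of_nat (S j) + 1)%Z with (- Z.of_nat j)%Z by lia.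
  reflexivity.
Qed.

Lemma measure_level_word_at_le n : INR (word_length k n) * nu (level_word_at n 0) <= 1.
Proof.
  rewrite (measure_disjoint_union_const nu Hnu (level_word_at n)).
  - apply (measure_le_1 nu Hnu). constructor; intro.
    apply borel_const_and, borel_level_word_at.
  - apply borel_level_word_at.
  - intros t t' x ? ? ?. now apply level_word_at_disjoint.
  - intros; apply measure_level_word_at.
Qed.

Lemma measure_no_wide_word_at_le N n : (2 * N <= word_length k n)%nat ->
  nu (no_wide_word_at N) <= INR (2 * N) * nu (level_word_at n 0).
Proof.
  intro HN. set (h := word_length k n) in *.
  (* enumerate the [2 N] candidate starting positions by [t < 2 N] *)
  set (pos := fun t => if Nat.ltb t N then t else (h - 2 * N + t)%nat).
  assert (Hpos : forall t, (t < 2 * N)%nat -> (pos t < h)%nat /\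
            ((t < N)%nat -> pos t = t) /\ ((N <= t)%nat -> pos t = (h - 2 * N + t)%nat)).
  { intros t Ht; unfold pos. destruct (Nat.ltb_spec t N); repeat split; lia. }
  rewrite (measure_disjoint_union_const nu Hnu (fun t => level_word_at n (pos t))).
  - apply (measure_mono nu Hnu); [apply borel_no_wide_word_at| |].
    + constructor; intro. apply borel_const_and, borel_level_word_at.
    + intros x Hx. destruct (no_wide_word_at_covered N n x HN Hx) as (j & Hj & Hw).
      fold h in Hj. destruct Hj as [Hj|Hj].
      * exists j. split; [lia|]. destruct (Hpos j) as (_ & Hlow & _); [lia|].
        now rewrite Hlow by lia.
      * exists (j + 2 * N - h)%nat. split; [lia|].
        destruct (Hpos (j + 2 * N - h)%nat) as (_ & _ & Hhigh); [lia|].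
        rewrite Hhigh by lia. now replace (h - 2 * N + (j + 2 * N - h))%nat with j by lia.
  - intro; apply borel_level_word_at.
  - intros t t' x Ht Ht' Hne. destruct (Hpos t Ht) as (? & ? & ?), (Hpos t' Ht') as (? & ? & ?).
    apply level_word_at_disjoint; auto.
    destruct (Nat.lt_ge_cases t N), (Nat.lt_ge_cases t' N); lia.
  - intros; apply measure_level_word_at.
Qed.

Lemma measure_no_wide_word_at N : nu (no_wide_word_at N) = 0.
Proof.
  apply (nonneg_eq0_of_mult_INR_bounded _ (INR (2 * N)) (2 * N)).
  - apply (measure_nonneg nu Hnu), borel_no_wide_word_at.
  - intros n Hn. pose proof (word_length_gt n) as Hh.
    set (e := nu (no_wide_word_at N)). set (f := nu (level_word_at n 0)).
    set (h := INR (word_length k n)).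
    pose proof (measure_no_wide_word_at_le N n ltac:(lia)) as Hle. fold e f in Hle.
    pose proof (measure_level_word_at_le n) as Hle1. fold f h in Hle1.
    assert (He : 0 <= e) by apply (measure_nonneg nu Hnu), borel_no_wide_word_at.
    assert (Hn_h : INR n <= h) by (apply le_INR; lia).
    assert (HN : 0 <= INR (2 * N)) by apply pos_INR.
    assert (e * h <= INR (2 * N) * f * h) by (apply Rmult_le_compat_r; [unfold h; apply pos_INR|auto]).
    assert (INR (2 * N) * (h * f) <= INR (2 * N) * 1) by (apply Rmult_le_compat_l; auto).
    assert (e * INR n <= e * h) by (apply Rmult_le_compat_l; auto).
    nra.
Qed.

Lemma measure_Sset : nu (Kset W) = 1 -> nu (Sset W) = 1.
Proof.
  intro HK.
  assert (Hrest : nu (fun x => Kset W x /\ ~ Sset W x) = 0).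
  { rewrite <- (measure_countable_union_null nu Hnu no_wide_word_at borel_no_wide_word_at
                 measure_no_wide_word_at).
    apply measure_ext; intro x. rewrite Sset_iff. split.
    - intros [HKx HS]. apply NNPP; intro Hnone. apply HS. split; auto.
      intro N. apply NNPP; intro HN. apply Hnone. now exists N.
    - intros [N [HKx HN]]. split; auto. intros [_ Hwide]. auto. }
  rewrite <- HK, (measure_ext nu (Kset W) (fun x => Sset W x \/ (Kset W x /\ ~ Sset W x))).
  - rewrite (measure_union2 nu Hnu), Hrest; [lra|apply borel_Sset| |tauto].
    apply borel_and; [apply borel_Kset|constructor; apply borel_Sset].
  - intro x. destruct (classic (Sset W x)) as [HS|HS]; [|tauto].
    pose proof (proj1 HS). tauto.
Qed.

End ShiftInvariantMeasure.
End Odometer.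

Theorem mainTheorem14
  (Sigma : Type) (k : nat -> nat) (W : nat -> list Sigma -> Prop)
  (HW : odometer_construction k W)
  (nu : ((Z -> Sigma) -> Prop) -> R)
  (Hnu : borel_probability nu)
  (HK : nu (Kset W) = 1)
  (Hinv : shift_invariant nu) :
  borel (Sset W) /\ nu (Sset W) = 1.
Proof.
  split.
  - exact (borel_Sset k W HW).
  - exact (measure_Sset k W HW nu Hnu Hinv HK).
Qed.
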